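(* Let $(\mathcal{C},\mathbb{E},\mathfrak{s})$ be an extriangulated category with enough injective objects. If $\mathcal{I}$ is a special precovering ideal of $\mathcal{C}$, then $\mathcal{I}^{\perp_{\mathbb{E}}}$ is a special preenveloping ideal.
   Context: An extriangulated category $(\mathcal{C},\mathbb{E},\mathfrak{s})$ (Nakaoka–Palu): additive $\mathcal{C}$, biadditive $\mathbb{E}:\mathcal{C}^{\mathrm{op}}\times\mathcal{C}\to\mathrm{Ab}$, additive realization $\mathfrak{s}$ assigning to each $\delta\in\mathbb{E}(C,A)$ an equivalence class of sequences $A\to B\to C$, forming $\mathbb{E}$-triangles $A\to B\to C\overset{\delta}{\dashrightarrow}$, satisfying (ET1)–(ET4), (ET3)$^{\mathrm{op}}$, (ET4)$^{\mathrm{op}}$. Notation $a_\star\delta=\mathbb{E}(C,a)(\delta)$, $c^\star\delta=\mathbb{E}(c,A)(\delta)$. A morphism of $\mathbb{E}$-triangles is a commuting triple $(a,b,c)$ with $a_\star\delta=c^\star\delta'$. An object $E$ is injective if for every $\mathbb{E}$-triangle $A\xrightarrow{x}B\to C\overset{\delta}{\dashrightarrow}$ every $A\to E$ factors through $x$ (equivalently $\mathbb{E}(C,E)=0$ for all $C$); $\mathcal{C}$ has enough injective objects if every $A$ admits an $\mathbb{E}$-triangle $A\to E\to C\overset{\delta}{\dashrightarrow}$ with $E$ injective. An ideal: class of morphisms with zeros, closed under sums and two-sided composition. $\mathcal{M}^{\perp_{\mathbb{E}}}=\{g:A\to Y\mid m^\star g_\star\delta=0\ \forall m\in\mathcal{M},\,m:X\to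 C,\ \forall\delta\in\mathbb{E}(C,A)\}$; ${}^{\perp_{\mathbb{E}}}\mathcal{M}=\{g:X\to C\mid g^\star m_\star\delta=0\ \forall m\in\mathcal{M},\,m:A\to Y,\ \forall\delta\in\mathbb{E}(C,A)\}$. A special $\mathcal{I}$-precover of $C$: $i:X\to C$ in $\mathcal{I}$ with $\mathbb{E}$-triangles $A\to B\to C\overset{\delta}{\dashrightarrow}$, $A'\to X\xrightarrow{i}C\overset{\delta'}{\dashrightarrow}$ and a morphism $(j,b,\mathrm{id}_C)$ between them with $j\in\mathcal{I}^{\perp_{\mathbb{E}}}$. A special $\mathcal{J}$-preenvelope of $A$: $e:A\to X$ in $\mathcal{J}$ with $\mathbb{E}$-triangles $A\xrightarrow{e}X\to Y\overset{\delta}{\dashrightarrow}$, $A\to B\to C\overset{\delta'}{\dashrightarrow}$ and a morphism $(\mathrm{id}_A,b,j)$ from the first to the second with $j\in{}^{\perp_{\mathbb{E}}}\mathcal{J}$. Special precovering (resp. preenveloping) ideal: every object has a special precover (resp. preenvelope). *)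

From HB Require Import structures.
From mathcomp Require Import all_boot all_algebra.
Set Implicit Arguments. Unset Strict Implicit. Unset Printing Implicit Defensive.
Import GRing.Theory.
Local Open Scope ring_scope.

Record Precat := {
  Obj :> Type;
  Mor : Obj -> Obj -> zmodType;
  idm : forall A, Mor A A;
  comp : forall A B C, Mor B C -> Mor A B -> Mor A C;
  compA : forall A B C D (h : Mor C D) (g : Mor B C) (f : Mor A B),
     comp h (comp g f) = comp (comp h g) f;
  comp1m : forall A B (f : Mor A B), comp (idm B) f = f;
  compm1 : forall A B (f : Mor A B), comp f (idm A) = f;
  compDl : forall A B C (g g' : Mor B C) (f : Mor A B),
     comp (g + g') f = comp g f + comp g' f;
  compDr : forall A B C (g : Mor B C) (f f' : Mor A B),
     comp g (f + f') = comp g f + comp g f'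
}.
Arguments Mor {p}.
Arguments idm {p}.
Arguments comp {p A B C}.

Section Additive.
Variable K : Precat.

Definition is_zero_obj (Z : K) : Prop := idm Z = 0.

Definition is_biprod (A B P : K) (i1 : Mor A P) (i2 : Mor B P)
    (p1 : Mor P A) (p2 : Mor P B) : Prop :=
  [/\ comp p1 i1 = idm A, comp p2 i2 = idm B, comp p1 i2 = 0, comp p2 i1 = 0
    & comp i1 p1 + comp i2 p2 = idm P].

Definition additive_cat : Prop :=
  (exists Z : K, is_zero_obj Z) /\
  (forall A B : K, exists (P : K) (i1 : Mor A P) (i2 : Mor B P)
     (p1 : Mor P A) (p2 : Mor P B), is_biprod i1 i2 p1 p2).

Definition is_iso (A B : K) (f : Mor A B) : Prop :=
  exists g : Mor B A, comp g f = idm A /\ comp f g = idm B.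

Section Ext.
(** E(C,A): contravariant in C, covariant in A.
    push a d = a_* d ,  pull c d = c^* d. *)
Variable E : K -> K -> zmodType.
Variable push : forall {C A A' : K}, Mor A A' -> E C A -> E C A'.
Variable pull : forall {C C' A : K}, Mor C' C -> E C A -> E C' A.
(** realization: real d x y  means  A -x-> B -y-> C  lies in the class s(d) *)
Variable real : forall {A C : K}, E C A -> forall {B : K}, Mor A B -> Mor B C -> Prop.

Definition biadditive : Prop :=
  [/\ (forall C A (d : E C A), push (idm A) d = d),
      (forall C A A' A'' (a : Mor A A') (a' : Mor A' A'') (d : E C A),
          push (comp a' a) d = push a' (push a d)),
      (forall C A (d : E C A), pull (idm C) d = d),
      (forall C C' C'' A (c : Mor C' C) (c' : Mor C'' C') (d : E C A),
          pull (comp c c') d = pull c' (pull c d))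
    & (forall C C' A A' (a : Mor A A') (c : Mor C' C) (d : E C A),
          push a (pull c d) = pull c (push a d))] /\
  [/\ (forall C A A' (a : Mor A A') (d d' : E C A),
          push a (d + d') = push a d + push a d'),
      (forall C A A' (a a' : Mor A A') (d : E C A),
          push (a + a') d = push a d + push a' d),
      (forall C C' A (c : Mor C' C) (d d' : E C A),
          pull c (d + d') = pull c d + pull c d')
    & (forall C C' A (c c' : Mor C' C) (d : E C A),
          pull (c + c') d = pull c d + pull c' d)].

(** s(d) is an equivalence class of sequences A -> B -> C, where
    A -x-> B -y-> C ~ A -x'-> B' -y'-> C iff there is an isomorphism
    b : B -> B' with b x = x' and y' b = y. *)
Definition realization_class : Prop :=
  [/\ (forall A C (d : E C A), exists (B : K) (x : Mor A B) (y : Mor B C), real d x y),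
      (forall A C (d : E C A) B B' (x : Mor A B) (y : Mor B C) (x' : Mor A B') (y' : Mor B' C),
          real d x y -> real d x' y' ->
          exists b : Mor B B', is_iso b /\ comp b x = x' /\ comp y' b = y)
    & (forall A C (d : E C A) B B' (x : Mor A B) (y : Mor B C) (x' : Mor A B') (y' : Mor B' C)
          (b : Mor B B'), real d x y -> is_iso b -> comp b x = x' -> comp y' b = y ->
          real d x' y')].

Definition tri_mor (A B C A' B' C' : K) (d : E C A) (x : Mor A B) (y : Mor B C)
    (d' : E C' A') (x' : Mor A' B') (y' : Mor B' C')
    (a : Mor A A') (b : Mor B B') (c : Mor C C') : Prop :=
  [/\ comp b x = comp x' a, comp c y = comp y' b & push a d = pull c d'].

Definition ET2 : Prop :=
  (forall A C P (i1 : Mor A P) (i2 : Mor C P) (p1 : Mor P A) (p2 : Mor P C),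
      is_biprod i1 i2 p1 p2 -> real (0 : E C A) i1 p2) /\
  (forall A A' B B' C C' (PA PB PC : K)
      (iA : Mor A PA) (iA' : Mor A' PA) (pA : Mor PA A) (pA' : Mor PA A')
      (iB : Mor B PB) (iB' : Mor B' PB) (pB : Mor PB B) (pB' : Mor PB B')
      (iC : Mor C PC) (iC' : Mor C' PC) (pC : Mor PC C) (pC' : Mor PC C')
      (d : E C A) (d' : E C' A') (x : Mor A B) (y : Mor B C) (x' : Mor A' B') (y' : Mor B' C'),
      is_biprod iA iA' pA pA' -> is_biprod iB iB' pB pB' -> is_biprod iC iC' pC pC' ->
      real d x y -> real d' x' y' ->
      real (push iA (pull pC d) + push iA' (pull pC' d'))
           (comp iB (comp x pA) + comp iB' (comp x' pA'))
           (comp iC (comp y pB) + comp iC' (comp y' pB'))).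

Definition ET3 : Prop :=
  forall A B C A' B' C' (d : E C A) (x : Mor A B) (y : Mor B C)
    (d' : E C' A') (x' : Mor A' B') (y' : Mor B' C') (a : Mor A A') (b : Mor B B'),
    real d x y -> real d' x' y' -> comp b x = comp x' a ->
    exists c : Mor C C', tri_mor d x y d' x' y' a b c.

Definition ET3op : Prop :=
  forall A B C A' B' C' (d : E C A) (x : Mor A B) (y : Mor B C)
    (d' : E C' A') (x' : Mor A' B') (y' : Mor B' C') (b : Mor B B') (c : Mor C C'),
    real d x y -> real d' x' y' -> comp c y = comp y' b ->
    exists a : Mor A A', tri_mor d x y d' x' y' a b c.

Definition ET4 : Prop :=
  forall (A B C D F : K) (f : Mor A B) (f' : Mor B D) (g : Mor B C) (g' : Mor C F)
    (d : E D A) (d' : E F B),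
    real d f f' -> real d' g g' ->
    exists (Eo : K) (dd : Mor D Eo) (e : Mor Eo F) (h' : Mor C Eo) (d'' : E Eo A),
      [/\ real d'' (comp g f) h', real (push f' d') dd e,
          pull dd d'' = d, push f d'' = pull e d' &
          comp h' g = comp dd f' /\ comp e h' = g'].

Definition ET4op : Prop :=
  forall (A B C D F : K) (f' : Mor D B) (f : Mor B A) (g' : Mor F C) (g : Mor C B)
    (d : E A D) (d' : E B F),
    real d f' f -> real d' g' g ->
    exists (Eo : K) (h' : Mor Eo C) (dd : Mor Eo D) (e : Mor F Eo) (d'' : E A Eo),
      [/\ real d'' h' (comp f g), real (pull f' d') e dd,
          push dd d'' = d, pull f d'' = push e d' &
          comp g h' = comp f' dd /\ comp h' e = g'].

End Ext.
End Additive.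

Record Extri := {
  ecat :> Precat;
  Ext : ecat -> ecat -> zmodType;
  push : forall (C A A' : ecat), Mor A A' -> Ext C A -> Ext C A';
  pull : forall (C C' A : ecat), Mor C' C -> Ext C A -> Ext C' A;
  real : forall (A C : ecat), Ext C A -> forall (B : ecat), Mor A B -> Mor B C -> Prop;
  ax_additive : additive_cat ecat;
  ax_ET1 : biadditive push pull;
  ax_real : realization_class real;
  ax_ET2 : ET2 push pull real;
  ax_ET3 : ET3 push pull real;
  ax_ET3op : ET3op push pull real;
  ax_ET4 : ET4 push pull real;
  ax_ET4op : ET4op push pull real
}.
Arguments Ext {e}.
Arguments push {e C A A'}.
Arguments pull {e C C' A}.
Arguments real {e A C} d {B}.

Section Notions.
Variable X : Extri.

Definition injective_obj (I : X) : Prop :=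
  forall (A B C : X) (d : Ext C A) (x : Mor A B) (y : Mor B C), real d x y ->
  forall u : Mor A I, exists v : Mor B I, comp v x = u.

Definition enough_injectives : Prop :=
  forall A : X, exists (I C : X) (x : Mor A I) (y : Mor I C) (d : Ext C A),
    injective_obj I /\ real d x y.

Definition ideal (I : forall A B : X, Mor A B -> Prop) : Prop :=
  [/\ (forall A B : X, I A B 0),
      (forall (A B : X) (f g : Mor A B), I A B f -> I A B g -> I A B (f + g))
    & (forall (A B C D : X) (h : Mor C D) (f : Mor B C) (g : Mor A B),
         I B C f -> I A D (comp h (comp f g)))].

Definition perpR (I : forall A B : X, Mor A B -> Prop) (A Y : X) (g : Mor A Y) : Prop :=
  forall (X0 C : X) (m : Mor X0 C), I X0 C m ->
  forall d : Ext C A, pull m (push g d) = 0.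

Definition perpL (J : forall A B : X, Mor A B -> Prop) (X0 C : X) (g : Mor X0 C) : Prop :=
  forall (A Y : X) (m : Mor A Y), J A Y m ->
  forall d : Ext C A, pull g (push m d) = 0.

Definition tri_morX (A B C A' B' C' : X) (d : Ext C A) (x : Mor A B) (y : Mor B C)
    (d' : Ext C' A') (x' : Mor A' B') (y' : Mor B' C')
    (a : Mor A A') (b : Mor B B') (c : Mor C C') : Prop :=
  tri_mor (@push X) (@pull X) d x y d' x' y' a b c.

Definition special_precover (I : forall A B : X, Mor A B -> Prop) (C X0 : X) (i : Mor X0 C) : Prop :=
  I X0 C i /\
  exists (A B A' : X) (x : Mor A B) (y : Mor B C) (d : Ext C A)
         (x' : Mor A' X0) (d' : Ext C A') (j : Mor A A') (b : Mor B X0),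
    [/\ real d x y, real d' x' i, tri_morX d x y d' x' i j b (idm C) & perpR I j].

Definition special_preenvelope (J : forall A B : X, Mor A B -> Prop) (A X0 : X) (e : Mor A X0) : Prop :=
  J A X0 e /\
  exists (Y B C : X) (y : Mor X0 Y) (d : Ext Y A) (x' : Mor A B) (y' : Mor B C)
         (d' : Ext C A) (b : Mor X0 B) (j : Mor Y C),
    [/\ real d e y, real d' x' y', tri_morX d e y d' x' y' (idm A) b j & perpL J j].

Definition special_precovering (I : forall A B : X, Mor A B -> Prop) : Prop :=
  ideal I /\ forall C : X, exists (X0 : X) (i : Mor X0 C), special_precover I i.

Definition special_preenveloping (J : forall A B : X, Mor A B -> Prop) : Prop :=
  ideal J /\ forall A : X, exists (X0 : X) (e : Mor A X0), special_preenvelope J e.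

End Notions.

(* Given A, take an E-triangle A -> E -> C with E injective and a special
   I-precover i : X0 -> C, and pull the triangle back along i, obtaining
   A -e-> M -> X0.  The extension of i comes from some j in I^perp, so every
   morphism of I into C kills it and therefore factors through i.  Since every
   extension of A is pulled back from A -> E -> C, this forces e into I^perp;
   the pullback square then exhibits e as a special preenvelope whose
   comparison map is i, which lies in I and hence in ^perp(I^perp). *)

From Pilot Require Import Defs.
From mathcomp Require Import all_boot all_algebra.
Set Implicit Arguments. Unset Strict Implicit. Unset Printing Implicit Defensive.
Import GRing.Theory.
Local Open Scope ring_scope.

Local Notation comp := Defs.comp.
Local Notation compA := Defs.compA.

Lemma raddf0_of (U V : zmodType) (f : U -> V) : {morph f : x y / x + y} -> f 0 = 0.
Proof. by move=> fD; apply: (@addrI _ (f 0)); rewrite -fD !addr0. Qed.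

Lemma raddfN_of (U V : zmodType) (f : U -> V) (x : U) :
  {morph f : x y / x + y} -> f (- x) = - f x.
Proof. by move=> fD; apply/eqP; rewrite -addr_eq0 -fD addNr (raddf0_of fD). Qed.

Section Extriangulated.
Variable X : Extri.

Section Composition.
Variables A B C : X.

Lemma comp0m (f : Mor A B) : comp (0 : Mor B C) f = 0.
Proof. exact: (raddf0_of (fun g g' => compDl g g' f)). Qed.

Lemma compm0 (g : Mor B C) : comp g (0 : Mor A B) = 0.
Proof. exact: (raddf0_of (compDr g)). Qed.

Lemma compBl (g g' : Mor B C) (f : Mor A B) : comp (g - g') f = comp g f - comp g' f.
Proof. by rewrite compDl (raddfN_of _ (fun g g' => compDl g g' f)). Qed.

Lemma compBr (g : Mor B C) (f f' : Mor A B) : comp g (f - f') = comp g f - comp g f'.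
Proof. by rewrite compDr (raddfN_of _ (compDr g)). Qed.

End Composition.

Lemma push_idm (C A : X) (d : Ext C A) : push (idm A) d = d.
Proof. by case: (ax_ET1 X) => [[]]. Qed.

Lemma pull_idm (C A : X) (d : Ext C A) : pull (idm C) d = d.
Proof. by case: (ax_ET1 X) => [[]]. Qed.

Lemma push_comp (C A A' A'' : X) (a : Mor A A') (a' : Mor A' A'') (d : Ext C A) :
  push (comp a' a) d = push a' (push a d).
Proof. by case: (ax_ET1 X) => [[]]. Qed.

Lemma pull_comp (C C' C'' A : X) (c : Mor C' C) (c' : Mor C'' C') (d : Ext C A) :
  pull (comp c c') d = pull c' (pull c d).
Proof. by case: (ax_ET1 X) => [[]]. Qed.

Lemma push_pull (C C' A A' : X) (a : Mor A A') (c : Mor C' C) (d : Ext C A) :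
  push a (pull c d) = pull c (push a d).
Proof. by case: (ax_ET1 X) => [[]]. Qed.

Lemma pushD (C A A' : X) (a : Mor A A') (d d' : Ext C A) :
  push a (d + d') = push a d + push a d'.
Proof. by case: (ax_ET1 X) => _ []. Qed.

Lemma pushDm (C A A' : X) (a a' : Mor A A') (d : Ext C A) :
  push (a + a') d = push a d + push a' d.
Proof. by case: (ax_ET1 X) => _ []. Qed.

Lemma pullD (C C' A : X) (c : Mor C' C) (d d' : Ext C A) :
  pull c (d + d') = pull c d + pull c d'.
Proof. by case: (ax_ET1 X) => _ []. Qed.

Lemma push0 (C A A' : X) (a : Mor A A') : push a (0 : Ext C A) = 0.
Proof. exact: (raddf0_of (pushD a)). Qed.

Lemma pull0 (C C' A : X) (c : Mor C' C) : pull c (0 : Ext C A) = 0.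
Proof. exact: (raddf0_of (pullD c)). Qed.

Lemma push0m (C A A' : X) (d : Ext C A) : push (0 : Mor A A') d = 0.
Proof. exact: (raddf0_of (fun a a' => pushDm a a' d)). Qed.

Lemma zero_obj_exists : exists Z : X, is_zero_obj Z.
Proof. by case: (ax_additive X). Qed.

Lemma biprod_exists (A B : X) : exists (P : X) (i1 : Mor A P) (i2 : Mor B P)
  (p1 : Mor P A) (p2 : Mor P B), is_biprod i1 i2 p1 p2.
Proof. by case: (ax_additive X). Qed.

Lemma real_split (A C P : X) (i1 : Mor A P) (i2 : Mor C P) (p1 : Mor P A) (p2 : Mor P C) :
  is_biprod i1 i2 p1 p2 -> real (0 : Ext C A) i1 p2.
Proof. by case: (ax_ET2 X) => split_real _; apply: split_real. Qed.

Lemma biprod_sym (A B P : X) (i1 : Mor A P) (i2 : Mor B P) (p1 : Mor P A) (p2 : Mor P B) :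
  is_biprod i1 i2 p1 p2 -> is_biprod i2 i1 p2 p1.
Proof. by case=> *; split; rewrite // addrC. Qed.

Lemma biprod_zero (B Z : X) : is_zero_obj Z ->
  is_biprod (idm B) (0 : Mor Z B) (idm B) (0 : Mor B Z).
Proof. by move=> Z0; split; rewrite ?comp1m ?compm0 ?comp0m ?addr0. Qed.

Lemma biprod_shear (C W P : X) (iC : Mor C P) (iW : Mor W P) (pC : Mor P C)
    (pW : Mor P W) (c : Mor W C) :
  is_biprod iC iW pC pW ->
  is_biprod (comp iC c + iW) iC pW (pC - comp c pW).
Proof.
case=> pCiC pWiW pCiW pWiC sum1; split.
- by rewrite compDr compA pWiC comp0m add0r.
- by rewrite compBl -compA pWiC compm0 subr0.
- by [].
- rewrite compBl compDr (compDr (comp c pW)) compA pCiC comp1m pCiW addr0.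
  by rewrite -!compA (compA pW) pWiC comp0m compm0 pWiW compm1 add0r subrr.
- by rewrite (compDl (comp iC c)) compBr -!compA -sum1 addrC addrA subrK.
Qed.

Lemma real_biprod_trivial (A B C W PB PC : X) (d : Ext C A) (x : Mor A B) (y : Mor B C)
    (iB : Mor B PB) (iB' : Mor W PB) (pB : Mor PB B) (pB' : Mor PB W)
    (iC : Mor C PC) (iC' : Mor W PC) (pC : Mor PC C) (pC' : Mor PC W) :
  is_biprod iB iB' pB pB' -> is_biprod iC iC' pC pC' -> real d x y ->
  real (pull pC d) (comp iB x) (comp iC (comp y pB) + comp iC' pB').
Proof.
move=> PBsum PCsum dxy; have [Z Z0] := zero_obj_exists.
have W_split := real_split (biprod_sym (biprod_zero W Z0)).
have := (proj2 (ax_ET2 X)) _ _ _ _ _ _ _ _ _ _ _ _ _ _ _ _ _ _ _ _ _ _ _ _ _ _ _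
  (biprod_zero A Z0) PBsum PCsum dxy W_split.
by rewrite push_idm pull0 push0 addr0 compm1 comp0m compm0 addr0 comp1m.
Qed.

Lemma push_inflation_eq0 (A B C : X) (d : Ext C A) (x : Mor A B) (y : Mor B C) :
  real d x y -> push x d = 0.
Proof.
move=> dxy; have [Z Z0] := zero_obj_exists.
have [c [_ _ ->]] := ax_ET3 dxy (real_split (biprod_zero B Z0)) (erefl (comp (idm B) x)).
exact: pull0.
Qed.

(* Realization of morphisms of extensions is not among the axioms, so the
   pullback comes from (ET4)^op applied to the sheared split triangle
   W -> C (+) W -> C and the direct sum of the given triangle with W = W. *)
Lemma real_pull (A B C W : X) (d : Ext C A) (x : Mor A B) (y : Mor B C) (c : Mor W C) :
  real d x y -> exists (M : X) (e : Mor A M) (z : Mor M W) (b : Mor M B),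
    [/\ real (pull c d) e z, comp b e = x & comp y b = comp c z].
Proof.
move=> dxy.
have [PB [iB [iB' [pB [pB' PBsum]]]]] := biprod_exists B W.
have [PC [iC [iC' [pC [pC' PCsum]]]]] := biprod_exists C W.
have sum_real := real_biprod_trivial PBsum PCsum dxy.
have shear_real := real_split (biprod_shear c PCsum).
have [M [h [z [e [d'' [_ real_ez _ _ [sq tri]]]]]]] := ax_ET4op shear_real sum_real.
have [pCiC _ pCiC' _ _] := PCsum; have [pBiB _ _ _ _] := PBsum.
have pC_shear : comp pC (comp iC c + iC') = c.
  by rewrite compDr compA pCiC comp1m pCiC' addr0.
exists M, e, z, (comp pB h); split.
- by rewrite -pull_comp pC_shear in real_ez.
- by rewrite -compA tri compA pBiB comp1m.
have pC_sum : comp pC (comp iC (comp y pB) + comp iC' pB') = comp y pB.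
  by rewrite compDr !compA pCiC pCiC' comp1m comp0m addr0.
by rewrite compA -pC_shear -(compA pC) -sq compA pC_sum.
Qed.

Lemma pull_eq0_lift (A B C W : X) (d : Ext C A) (x : Mor A B) (y : Mor B C) (c : Mor W C) :
  real d x y -> pull c d = 0 -> exists v : Mor W B, comp y v = c.
Proof.
move=> dxy c_d0; have [M [e [z [b [ez_real _ yb]]]]] := real_pull c dxy.
rewrite c_d0 in ez_real.
have [P [i1 [i2 [p1 [p2 Psum]]]]] := biprod_exists A W.
have [_ real_unique _] := ax_real X.
have [phi [_ [_ z_phi]]] := real_unique _ _ _ _ _ _ _ _ _ (real_split Psum) ez_real.
have [_ p2i2 _ _ _] := Psum.
exists (comp b (comp phi i2)).
by rewrite compA yb -compA (compA z) z_phi p2i2 compm1.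
Qed.

Lemma injective_ext_pull (A I C C1 : X) (d : Ext C A) (x : Mor A I) (y : Mor I C) :
  injective_obj I -> real d x y ->
  forall d1 : Ext C1 A, exists c : Mor C1 C, d1 = pull c d.
Proof.
move=> I_inj dxy d1; have [real_exists _ _] := ax_real X.
have [B1 [x1 [y1 d1_real]]] := real_exists _ _ d1.
have [v vx1] := I_inj _ _ _ _ _ _ d1_real x.
have [c [_ _ c_d]] := ax_ET3 d1_real dxy (etrans vx1 (esym (compm1 x))).
by exists c; rewrite -c_d push_idm.
Qed.

Section Ideal.
Variable I : forall A B : X, Mor A B -> Prop.

Lemma ideal_compl (B C D : X) (h : Mor C D) (f : Mor B C) :
  ideal I -> I f -> I (comp h f).
Proof. by case=> _ _ Icomp If; rewrite -[f]compm1; apply: Icomp. Qed.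

Lemma perpR_ideal : ideal (perpR I).
Proof.
split.
- by move=> A B X0 C m _ d; rewrite push0m pull0.
- by move=> A B f g f_perp g_perp X0 C m Im d; rewrite pushDm pullD f_perp ?g_perp ?addr0.
- move=> A B C D h f g f_perp X0 C0 m Im d.
  by rewrite !push_comp -push_pull f_perp // push0.
Qed.

Lemma ideal_perpL_perpR (A B : X) (f : Mor A B) : I f -> perpL (perpR I) f.
Proof. by move=> If A' Y m m_perp d; apply: m_perp. Qed.

Lemma special_precover_lift (C X0 X1 : X) (i : Mor X0 C) (m : Mor X1 C) :
  special_precover I i -> I m -> exists t : Mor X1 X0, comp i t = m.
Proof.
case=> _ [A [B [A' [x [y [d [x' [d' [j [b [_ d'_real [_ _ jd] j_perp]]]]]]]]]]] Im.
apply: (pull_eq0_lift d'_real).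
by rewrite -[d']pull_idm -jd; apply: j_perp.
Qed.

Lemma pull_injective_perpR (A E C X0 M : X) (dE : Ext C A) (xE : Mor A E) (yE : Mor E C)
    (i : Mor X0 C) (e : Mor A M) (z : Mor M X0) :
  ideal I -> injective_obj E -> real dE xE yE ->
  (forall (X1 : X) (m : Mor X1 C), I m -> exists t : Mor X1 X0, comp i t = m) ->
  real (pull i dE) e z -> perpR I e.
Proof.
move=> I_ideal E_inj dE_real I_lift ez_real X1 C1 m Im d.
have [c ->] := injective_ext_pull E_inj dE_real d.
have [t it] := I_lift _ _ (ideal_compl c I_ideal Im).
rewrite push_pull -pull_comp -it pull_comp -push_pull (push_inflation_eq0 ez_real).
exact: pull0.
Qed.

End Ideal.
End Extriangulated.

Theorem theorem4p4 (X : Extri) (I : forall A B : X, Mor A B -> Prop)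
  (hinj : enough_injectives X) (hI : special_precovering I) :
  special_preenveloping (perpR I).
Proof.
split; first exact: perpR_ideal.
move=> A; have [E [C [xE [yE [dE [E_inj dE_real]]]]]] := hinj A.
have [I_ideal precover] := hI.
have [X0 [i i_prec]] := precover C.
have [M [e [z [b [ez_real be yb]]]]] := real_pull i dE_real.
exists M, e; split.
  exact: pull_injective_perpR I_ideal E_inj dE_real
    (fun _ _ => special_precover_lift i_prec) ez_real.
exists X0, E, C, z, (pull i dE), xE, yE, dE, b, i; split=> //.
- by split; rewrite ?compm1 ?push_idm.
- exact: ideal_perpL_perpR i_prec.1.
Qed.
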